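(* For every integer $h\ge 0$, the generating function $M^{\le h}(z)=\sum_{n\ge0} m_{n,h} z^n$, where $m_{n,h}$ is the number of Motzkin paths of length $n$ and height at most $h$, satisfies $$M^{\le h}(z)=(1+v+v^2)\,\frac{1-v^{2h+2}}{1-v^{2h+4}},$$ and the generating function $N^{\le h}(z)=\sum_{n\ge0} n_{n,h} z^n$, where $n_{n,h}$ is the number of Motzkin paths of length $n$ and height at most $h$ having no horizontal step on level $h$, satisfies $$N^{\le h}(z)=(1+v+v^2)\,\frac{1-v^{2h+1}}{1-v^{2h+3}}.$$ Both identities hold as identities of formal power series in $z$.
   Context: A Motzkin path of length $n$ is a sequence of $n$ steps, each an up-step $(1,1)$, a down-step $(1,-1)$ or a horizontal step $(1,0)$, starting at $(0,0)$, ending at $(n,0)$, and never going below the $x$-axis. Its height is the maximal $y$-coordinate reached. A horizontal step on level $j$ is a horizontal step from $(x,j)$ to $(x+1,j)$. Throughout, $v=v(z)=\frac{1-z-\sqrt{1-2z-3z^2}}{2z}=z+z^2+\cdots$ denotes the formal power series with $v(0)=0$ satisfying $z=\frac{v}{1+v+v^2}$. *)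

From HB Require Import structures.
From mathcomp Require Import all_boot all_order all_algebra.
Set Implicit Arguments. Unset Strict Implicit. Unset Printing Implicit Defensive.
Import Order.TTheory GRing.Theory Num.Theory.
Local Open Scope ring_scope.

Inductive step := Up | Down | Flat.

Definition step_code (s : step) : 'I_3 :=
  match s with Up => @Ordinal 3 0 isT | Down => @Ordinal 3 1 isT | Flat => @Ordinal 3 2 isT end.
Definition step_decode (i : 'I_3) : step :=
  match val i with 0 => Up | 1 => Down | _ => Flat end.
Lemma step_codeK : cancel step_code step_decode.
Proof. by case. Qed.
HB.instance Definition _ := Finite.copy step (can_type step_codeK).

Definition delta (s : step) : int :=
  match s with Up => 1 | Down => -1 | Flat => 0 end.

Definition levels (p : seq step) : seq int :=
  scanl (fun y s => y + delta s) 0 p.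

(** y-coordinates of the starting points of the steps of p *)
Definition start_levels (p : seq step) : seq int := belast 0 (levels p).

Definition is_motzkin (p : seq step) : bool :=
  all (fun y => 0 <= y) (levels p) && (last 0 (levels p) == 0).

Definition height_le (h : nat) (p : seq step) : bool :=
  all (fun y => y <= h%:Z) (levels p).

Definition has_flat_on (j : nat) (p : seq step) : bool :=
  has (fun q : int * step => (q.1 == j%:Z) && (q.2 == Flat)) (zip (start_levels p) p).

Definition m_nh (n h : nat) : nat :=
  #|[pred p : n.-tuple step | is_motzkin p && height_le h p]|.
Definition n_nh (n h : nat) : nat :=
  #|[pred p : n.-tuple step | [&& is_motzkin p, height_le h p & ~~ has_flat_on h p]]|.

Definition fps := nat -> rat.

Definition fps_const (c : rat) : fps := fun n => if n is 0 then c else 0.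
Definition fps_one : fps := fps_const 1.
Definition fps_z : fps := fun n => if n == 1%N then 1 else 0.
Definition fps_add (a b : fps) : fps := fun n => a n + b n.
Definition fps_sub (a b : fps) : fps := fun n => a n - b n.
Definition fps_mul (a b : fps) : fps :=
  fun n => \sum_(i < n.+1) a i * b (n - i)%N.
Definition fps_pow (a : fps) (k : nat) : fps := iter k (fps_mul a) fps_one.

(** multiplicative inverse (meaningful when a 0 != 0):
    b 0 = (a 0)^-1,  b n = -(a 0)^-1 * \sum_{k=1}^{n} a k * b (n-k). *)
Fixpoint fps_inv_seq (a : fps) (n : nat) : seq rat :=
  match n with
  | 0 => [:: (a 0%N)^-1]
  | n'.+1 => let s := fps_inv_seq a n' in
      rcons s (- (a 0%N)^-1 * \sum_(k < n'.+1) a k.+1 * nth 0 s (n' - k)%N)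
  end.
Definition fps_inv (a : fps) : fps := fun n => nth 0 (fps_inv_seq a n) n.
Definition fps_div (a b : fps) : fps := fps_mul a (fps_inv b).

Definition Mle (h : nat) : fps := fun n => (m_nh n h)%:R.
Definition Nle (h : nat) : fps := fun n => (n_nh n h)%:R.

Definition qv (v : fps) : fps := fps_add (fps_add fps_one v) (fps_pow v 2).

From mathcomp Require Import all_boot all_order all_algebra.
From mathcomp Require Import zify.
From Stdlib Require Import Ring FunctionalExtensionality.
Set Implicit Arguments. Unset Strict Implicit. Unset Printing Implicit Defensive.
Import Order.TTheory GRing.Theory Num.Theory.
Local Open Scope ring_scope.

(* Fix a height bound h and a flag b meaning "flat steps on level h are allowed".
   Let npaths b h n i count the step sequences of length n that start on level
   i, stay in the strip 0 <= y <= h, end on level 0 and (if b is false) make no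
   flat step on level h; then m_{n,h} = npaths true h n 0 and
   n_{n,h} = npaths false h n 0.  Splitting off the first step gives a linear
   recursion for npaths in n, whose right-hand side is the "neighbour sum"
   nbr b h over the levels reachable in one step from level i.
   Put e = 2h+2 (b true) or e = 2h+1 (b false), q = 1 + v + v^2 and
     G_i = q (v^i - v^(e-i)) / (1 - v^(e+2))      for 0 <= i <= h.
   Since z q = v, the G_i satisfy G_i = [i = 0] + z * nbr G i; after clearing
   denominators this is a polynomial identity in v, whose boundary cases hold
   because v^(h+1) - v^(e-h-1) vanishes (e even), resp. cancels against
   v^h - v^(e-h) (e odd). *)

Definition fps0 : fps := fun _ => 0.
Definition fps_opp (a : fps) : fps := fun n => - a n.

(** Truncation to degree n: series products agree with polynomial products on
    all coefficients up to n, so the ring laws are inherited from {poly rat}. *)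
Definition trunc (n : nat) (a : fps) : {poly rat} := \poly_(i < n.+1) a i.

Lemma coef_trunc n a i : (i <= n)%N -> (trunc n a)`_i = a i.
Proof. by move=> hi; rewrite coef_poly ltnS hi. Qed.

Lemma fps_mul_trunc m n a b :
  (m <= n)%N -> fps_mul a b m = (trunc n a * trunc n b)`_m.
Proof.
move=> hm; rewrite coefM /fps_mul; apply: eq_bigr => i _.
by rewrite !coef_trunc //; have := ltn_ord i; lia.
Qed.

Lemma fps_mulC a b : fps_mul a b = fps_mul b a.
Proof.
apply: functional_extensionality => n.
by rewrite !(fps_mul_trunc _ _ (leqnn n)) mulrC.
Qed.

Lemma fps_mulA a b c : fps_mul a (fps_mul b c) = fps_mul (fps_mul a b) c.
Proof.
apply: functional_extensionality => n.
transitivity ((trunc n a * (trunc n b * trunc n c))`_n).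
  rewrite coefM /fps_mul; apply: eq_bigr => i _.
  by rewrite coef_trunc ?leq_ord // -(fps_mul_trunc _ _ (leq_subr i n)).
rewrite mulrA [RHS]/fps_mul coefM; apply: eq_bigr => i _.
by rewrite [X in _ * X]coef_trunc ?leq_subr // -(fps_mul_trunc _ _ (leq_ord i)).
Qed.

Lemma fps_mul1 a : fps_mul fps_one a = a.
Proof.
apply: functional_extensionality => n.
by rewrite /fps_mul big_ord_recl /= subn0 mul1r big1 ?addr0 // => i _; rewrite mul0r.
Qed.

Lemma fps_mulDl a b c :
  fps_mul (fps_add a b) c = fps_add (fps_mul a c) (fps_mul b c).
Proof.
apply: functional_extensionality => n.
by rewrite /fps_mul /fps_add -big_split; apply: eq_bigr => i _; rewrite mulrDl.
Qed.

Lemma fps_ring_theory :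
  ring_theory fps0 fps_one fps_add fps_mul fps_sub fps_opp (@eq fps).
Proof.
split=> //; try exact: fps_mul1; try exact: fps_mulC; try exact: fps_mulA;
  try exact: fps_mulDl; move=> *; apply: functional_extensionality => n;
  by rewrite /fps_add /fps_opp /fps0 ?add0r ?subrr ?addrA // addrC.
Qed.

Add Ring fps_ring : fps_ring_theory.

Lemma fps_pow0 a : fps_pow a 0 = fps_one.
Proof. by []. Qed.

Lemma fps_powS a k : fps_pow a k.+1 = fps_mul a (fps_pow a k).
Proof. by []. Qed.

Lemma fps_mul_coef0 a b : fps_mul a b 0 = a 0%N * b 0%N.
Proof. by rewrite /fps_mul big_ord1. Qed.

Lemma fps_pow_coef0 a k : a 0%N = 0 -> fps_pow a k.+1 0 = 0.
Proof. by move=> a0; rewrite fps_powS fps_mul_coef0 a0 mul0r. Qed.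

Lemma fps_inv_seq_size a n : size (fps_inv_seq a n) = n.+1.
Proof. by elim: n => //= n IH; rewrite size_rcons IH. Qed.

Lemma fps_inv_seq_nth a n k :
  (k <= n)%N -> nth 0 (fps_inv_seq a n) k = fps_inv a k.
Proof.
elim: n k => [|n IH] k hk; first by have -> : k = 0%N by lia.
have [->//|hne] := eqVneq k n.+1.
by rewrite /= nth_rcons fps_inv_seq_size ifT ?IH //; lia.
Qed.

Lemma fps_invS a n : fps_inv a n.+1 =
  - (a 0%N)^-1 * \sum_(k < n.+1) a k.+1 * fps_inv a (n - k)%N.
Proof.
rewrite {1}/fps_inv /= nth_rcons fps_inv_seq_size ltnn eqxx.
by congr (_ * _); apply: eq_bigr => k _; rewrite fps_inv_seq_nth // leq_subr.
Qed.

Lemma fps_mulV a : a 0%N != 0 -> fps_mul a (fps_inv a) = fps_one.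
Proof.
move=> a0; apply: functional_extensionality => -[|n].
  by rewrite fps_mul_coef0 /fps_inv /= mulfV.
rewrite /fps_mul big_ord_recl /= subn0 fps_invS.
by rewrite mulrA mulrN mulfV // mulN1r addNr.
Qed.

Definition ind (c : bool) : fps := fps_const c%:R.

Lemma ind_true : ind true = fps_one.
Proof. by rewrite /ind mulr1n. Qed.

Lemma ind_false : ind false = fps0.
Proof. by apply: functional_extensionality => -[]. Qed.

Lemma coef_ind_mul c X n : fps_mul (ind c) X n = c%:R * X n.
Proof.
by rewrite /fps_mul big_ord_recl subn0 big1 ?addr0 // => i _; rewrite mul0r.
Qed.

Lemma coef_zmul0 X : fps_mul fps_z X 0 = 0.
Proof. by rewrite fps_mul_coef0 mul0r. Qed.

Lemma coef_zmulS X n : fps_mul fps_z X n.+1 = X n.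
Proof.
rewrite /fps_mul big_ord_recl big_ord_recl /= mul0r add0r mul1r subSS subn0.
by rewrite big1 ?addr0 // => i _; rewrite mul0r.
Qed.

(** q = 1 + v + v^2 written with products only, as the ring tactic needs. *)
Lemma qv_expand v : qv v = fps_add (fps_add fps_one v) (fps_mul v (fps_mul v fps_one)).
Proof. by []. Qed.

Lemma qv_coef0 v : v 0%N = 0 -> qv v 0%N = 1.
Proof. by move=> v0; rewrite /qv /fps_add fps_pow_coef0 // v0 !addr0. Qed.

(** Dividing a relation q X = c D + v S by D (with D W = 1) and using z q = v
    turns it into the recursion X / D = c + z q S / D. *)
Lemma divide_relation (c D W z q v S : fps) :
  fps_mul D W = fps_one -> fps_mul z q = v ->
  fps_mul (fps_add (fps_mul c D) (fps_mul v S)) W =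
  fps_add c (fps_mul z (fps_mul q (fps_mul S W))).
Proof.
move=> DW <-.
transitivity (fps_add (fps_mul c (fps_mul D W)) (fps_mul z (fps_mul q (fps_mul S W)))).
  by ring.
by rewrite DW; ring.
Qed.

Fixpoint admissible (b : bool) (h : nat) (i : int) (p : seq step) : bool :=
  match p with
  | [::] => i == 0
  | s :: p' => [&& 0 <= i + delta s, i + delta s <= h%:Z,
                   (s != Flat) || b || (i != h%:Z) & admissible b h (i + delta s) p']
  end.

Lemma admissibleE b h i p : admissible b h i p =
  [&& all (fun y => 0 <= y) (scanl (fun y s => y + delta s) i p),
      all (fun y => y <= h%:Z) (scanl (fun y s => y + delta s) i p),
      last i (scanl (fun y s => y + delta s) i p) == 0 &
      b || ~~ has (fun q : int * step => (q.1 == h%:Z) && (q.2 == Flat))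
             (zip (belast i (scanl (fun y s => y + delta s) i p)) p)].
Proof.
elim: p i => [|s p IH] i /=; first by case: b; rewrite ?andbT.
rewrite IH {IH}; case: b; case: (s == Flat); case: (i == h%:Z);
by rewrite /= ?andbT ?andbF ?orbT ?orbF -?andbA; try (congr (_ && _); exact: andbCA).
Qed.

Definition npaths (b : bool) (h n : nat) (i : int) : nat :=
  #|[pred p : n.-tuple step | admissible b h i p]|.

Lemma npaths_sum b h n i :
  npaths b h n i = (\sum_(t : n.-tuple step) admissible b h i t)%N.
Proof.
by rewrite /npaths -sum1_card big_mkcond; apply: eq_bigr => t _; rewrite inE; case: admissible.
Qed.

Lemma npaths0 b h i : npaths b h 0 i = (i == 0).
Proof. by rewrite npaths_sum (big_pred1 [tuple]) // => t; apply/esym/eqP/tuple0. Qed.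

Lemma sum_step (F : step -> nat) : (\sum_(s : step) F s = F Up + F Down + F Flat)%N.
Proof.
rewrite (bigD1 Up) //= (bigD1 Down) //= (bigD1 Flat) //= big1 ?addn0 ?addnA //.
by case.
Qed.

Lemma sum_tupleS n (F : n.+1.-tuple step -> nat) :
  (\sum_(t : n.+1.-tuple step) F t =
   \sum_(s : step) \sum_(t : n.-tuple step) F [tuple of s :: t])%N.
Proof.
rewrite pair_bigA (reindex (fun u : step * n.-tuple step => [tuple of u.1 :: u.2])) //=.
exists (fun t : n.+1.-tuple step => (thead t, [tuple of behead t])).
  by move=> [x t] _ /=; rewrite theadE; congr pair; apply: val_inj.
by move=> t _ /=; rewrite -tuple_eta.
Qed.

Lemma npaths_first_step b h n i : npaths b h n.+1 i = (\sum_(s : step)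
  if [&& 0 <= i + delta s, i + delta s <= h%:Z & (s != Flat) || b || (i != h%:Z)]%R
  then npaths b h n (i + delta s)%R else 0)%N.
Proof.
rewrite npaths_sum sum_tupleS; apply: eq_bigr => s _ /=.
case: ifP => hs.
  by rewrite npaths_sum; apply: eq_bigr => t _; move: hs; rewrite !andbA => ->.
by rewrite big1 // => t _; move: hs; rewrite !andbA => ->.
Qed.

Lemma npaths_rec b h n (i : nat) : (i <= h)%N ->
  npaths b h n.+1 i = ((i < h) * npaths b h n i.+1 + (0 < i) * npaths b h n i.-1
                       + (b || (i != h)) * npaths b h n i)%N.
Proof.
have guard (c d : bool) (x y : nat) : c = d -> (d -> x = y) ->
    ((if c then x else 0) = d * y)%N.
  by move=> ->; case: d => [/(_ isT) ->|] /=; rewrite ?mul1n.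
move=> hih; rewrite npaths_first_step sum_step /=.
by congr (_ + _ + _); apply: guard; lia || (move=> *; congr npaths; lia).
Qed.

Lemma m_nh_npaths n h : m_nh n h = npaths true h n 0.
Proof.
apply: eq_card => p; rewrite !inE admissibleE /is_motzkin /height_le /levels /=.
by case: (all _ _); case: (all _ _); case: (_ == _).
Qed.

Lemma n_nh_npaths n h : n_nh n h = npaths false h n 0.
Proof.
apply: eq_card => p; rewrite !inE admissibleE /is_motzkin /height_le /has_flat_on.
by rewrite /start_levels /levels /=; case: (all _ _); case: (all _ _); case: (_ == _).
Qed.

Section NumeratorIdentities.
Variable v : fps.
Local Notation q := (qv v).

Definition numer (e i : nat) : fps := fps_sub (fps_pow v i) (fps_pow v (e - i)).
Definition denom (e : nat) : fps := fps_sub fps_one (fps_pow v (e + 2)).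

(** Away from level 0, q v^j = v (v^(j+1) + v^(j-1) + v^j), applied to both
    powers of the numerator. *)
Lemma numer_interior e i : (0 < i < e)%N ->
  fps_mul q (numer e i) =
  fps_mul v (fps_add (fps_add (numer e i.+1) (numer e i.-1)) (numer e i)).
Proof.
case: i => [//|j] /andP[_ hje].
have [k ->] : exists k, e = (j.+2 + k)%N by exists (e - j.+2)%N; lia.
have e1 : (j.+2 + k - j.+2 = k)%N by lia.
have e2 : (j.+2 + k - j = k.+2)%N by lia.
have e3 : (j.+2 + k - j.+1 = k.+1)%N by lia.
by rewrite /numer /= e1 e2 e3 qv_expand !fps_powS; ring.
Qed.

(** On level 0 the missing down-neighbour is compensated by the denominator. *)
Lemma numer_bottom e : (0 < e)%N ->
  fps_mul q (numer e 0) =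
  fps_add (denom e) (fps_mul v (fps_add (numer e 1) (numer e 0))).
Proof.
case: e => [//|k] _.
by rewrite /numer /denom !subn0 subSS subn0 addn2 qv_expand !fps_powS fps_pow0; ring.
Qed.

Lemma numer_full e i : (i < e)%N ->
  fps_mul q (numer e i) =
  fps_add (fps_mul (ind (i == 0)%N) (denom e))
    (fps_mul v (fps_add (fps_add (numer e i.+1) (fps_mul (ind (0 < i)%N) (numer e i.-1)))
                        (numer e i))).
Proof.
case: i => [|j] hj.
  by rewrite numer_bottom //= ind_true ind_false; ring.
by rewrite numer_interior //= ind_true ind_false; ring.
Qed.

Lemma numer_mid_even h : numer (2 * h + 2) h.+1 = fps0.
Proof. by rewrite /numer (_ : (2 * h + 2 - h.+1 = h.+1)%N); [ring | lia]. Qed.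

Lemma numer_mid_odd h : fps_add (numer (2 * h + 1) h.+1) (numer (2 * h + 1) h) = fps0.
Proof.
have e1 : (2 * h + 1 - h.+1 = h)%N by lia.
have e2 : (2 * h + 1 - h = h.+1)%N by lia.
by rewrite /numer e1 e2; ring.
Qed.
End NumeratorIdentities.

Definition top_exp (b : bool) (h : nat) : nat :=
  if b then (2 * h + 2)%N else (2 * h + 1)%N.

Definition nbr (b : bool) (h : nat) (F : nat -> fps) (i : nat) : fps :=
  fps_add (fps_add (fps_mul (ind (i < h)%N) (F i.+1)) (fps_mul (ind (0 < i)%N) (F i.-1)))
          (fps_mul (ind (b || (i != h))) (F i)).

Section GeneratingFunctions.
Variables (v : fps) (b : bool) (h : nat).
Hypotheses (v0 : v 0%N = 0) (zq : fps_mul fps_z (qv v) = v).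
Local Notation q := (qv v).
Local Notation e := (top_exp b h).

Lemma numer_rec i : (i <= h)%N ->
  fps_mul q (numer v e i) =
  fps_add (fps_mul (ind (i == 0)%N) (denom v e)) (fps_mul v (nbr b h (numer v e) i)).
Proof.
move=> hih; have hie : (i < e)%N by rewrite /top_exp; case: b; lia.
rewrite numer_full // /nbr.
have [hlt|hge] := ltnP i h.
  by rewrite (ltn_eqF hlt) orbT ind_true; ring.
have {hih hge hie} -> : i = h by lia.
rewrite eqxx orbF ind_false /top_exp; case: b => /=.
  by rewrite numer_mid_even ind_true; ring.
rewrite ind_false (_ : numer v (2 * h + 1) h.+1 =
  fps_sub (fps_add (numer v (2 * h + 1) h.+1) (numer v (2 * h + 1) h)) (numer v (2 * h + 1) h)).
  by rewrite numer_mid_odd; ring.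
by ring.
Qed.

Lemma denom_inv : fps_mul (denom v e) (fps_inv (denom v e)) = fps_one.
Proof.
by apply: fps_mulV; rewrite /denom addn2 /fps_sub fps_pow_coef0 // subr0 oner_neq0.
Qed.

Definition cand (i : nat) : fps :=
  fps_mul (fps_mul q (numer v e i)) (fps_inv (denom v e)).

Lemma cand_rec i : (i <= h)%N ->
  cand i = fps_add (ind (i == 0)%N) (fps_mul fps_z (nbr b h cand i)).
Proof.
move=> hih; rewrite {1}/cand numer_rec // (divide_relation _ _ denom_inv zq).
by rewrite /nbr /cand; ring.
Qed.

(** Both sides obey the same recursion in n, hence coincide. *)
Lemma cand_coef n i : (i <= h)%N -> cand i n = (npaths b h n i)%:R.
Proof.
elim: n i => [|n IH] i hih; rewrite cand_rec // /fps_add.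
  by rewrite coef_zmul0 addr0 npaths0; case: i {hih}.
have term (c : bool) j : (c -> j <= h)%N ->
    fps_mul (ind c) (cand j) n = (c * npaths b h n j)%:R.
  case: c => [/(_ isT)/IH hj|_]; rewrite coef_ind_mul natrM ?hj //.
  by rewrite !mul0r.
rewrite coef_zmulS /ind /fps_const add0r /nbr /fps_add npaths_rec //.
by rewrite !natrD !term //; lia.
Qed.

Lemma cand0 : cand 0 =
  fps_mul q (fps_div (fps_sub fps_one (fps_pow v e)) (denom v e)).
Proof. by rewrite /cand /numer subn0 fps_pow0 /fps_div; ring. Qed.

End GeneratingFunctions.

Theorem mainTheorem1 (v : fps) :
  v 0%N = 0%R ->
  fps_z = fps_div v (qv v) ->
  forall h : nat,
    Mle h = fps_mul (qv v)
              (fps_div (fps_sub fps_one (fps_pow v (2 * h + 2)))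
                       (fps_sub fps_one (fps_pow v (2 * h + 4))))
    /\
    Nle h = fps_mul (qv v)
              (fps_div (fps_sub fps_one (fps_pow v (2 * h + 1)))
                       (fps_sub fps_one (fps_pow v (2 * h + 3)))).
Proof.
move=> v0 hz h.
have zq : fps_mul fps_z (qv v) = v.
  rewrite hz /fps_div -fps_mulA [fps_mul (fps_inv _) _]fps_mulC.
  by rewrite fps_mulV ?qv_coef0 ?oner_neq0 //; ring.
have gf b n : (npaths b h n 0)%:R = fps_mul (qv v)
    (fps_div (fps_sub fps_one (fps_pow v (top_exp b h))) (denom v (top_exp b h))) n.
  by rewrite -(@cand_coef v b h v0 zq) // cand0.
split; apply: functional_extensionality => n.
  by rewrite /Mle m_nh_npaths gf /denom /= -addnA.
by rewrite /Nle n_nh_npaths gf /denom /= -addnA.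
Qed.
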